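(* Let $M, K, P, N$ be positive integers with $1 < M \le K \le P$. Then there exists a matrix $\mathbf{A} \in \mathbb{R}^{M \times N}$ such that every matrix $\mathbf{F} \in \mathbb{R}^{P \times N}$ with the property that, for every set $\chi \subseteq \{1,\ldots,P\}$ with $|\chi| = K$, the rows of $\mathbf{F}$ indexed by $\chi$ span all the rows of $\mathbf{A}$, has average row sparsity satisfying $$\bar{s} > \frac{N}{P}(P-K+M) - \frac{M^2}{P}\binom{P}{K-M+1}.$$ Moreover, if $N$ is sufficiently large that $M^2\binom{P}{K-M+1} = o(N)$, then $$\bar{s} > \frac{N}{P}(P-K+M) - o\!\left(\frac{N}{P}\right).$$
   Context: The sparsity of a vector is its number of nonzero entries; $\bar{s} = \frac{1}{P}\sum_{i=1}^P \|\mathbf{f}_i\|_0$, where $\mathbf{f}_i^T$ is the $i$-th row of $\mathbf{F}$ and $\|\cdot\|_0$ counts nonzero entries. *)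

From mathcomp Require Import all_boot all_order all_algebra.
From mathcomp Require Import reals.
Set Implicit Arguments. Unset Strict Implicit. Unset Printing Implicit Defensive.
Import Order.TTheory GRing.Theory Num.Theory.
Local Open Scope ring_scope.

Definition row_sparsity (R : realType) (P N : nat) (F : 'M[R]_(P, N)) (i : 'I_P) : nat :=
  #|[set j : 'I_N | F i j != 0]|.

Definition avg_sparsity (R : realType) (P N : nat) (F : 'M[R]_(P, N)) : R :=
  (\sum_(i < P) row_sparsity F i)%:R / P%:R.

Definition rows_span (R : realType) (M P N : nat) (F : 'M[R]_(P, N)) (chi : {set 'I_P})
  (A : 'M[R]_(M, N)) : Prop :=
  (A <= (\sum_(i in chi) <<row i F>>)%MS)%MS.

Definition K_robust (R : realType) (M K P N : nat) (F : 'M[R]_(P, N)) (A : 'M[R]_(M, N)) : Prop :=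
  forall chi : {set 'I_P}, #|chi| = K -> rows_span F chi A.

Definition tends_to0 (R : realType) (e : nat -> R) : Prop :=
  forall eps : R, 0 < eps -> exists n0 : nat, forall n, (n0 <= n)%N -> `|e n| < eps.

From mathcomp Require Import all_boot all_order all_algebra.
From mathcomp Require Import reals.
From mathcomp Require Import zify.
Import Order.TTheory GRing.Theory Num.Theory.
Set Implicit Arguments. Unset Strict Implicit. Unset Printing Implicit Defensive.
Local Open Scope ring_scope.

(* Take for A the M x N Vandermonde matrix with distinct nodes, so that any at
   most M of its columns are linearly independent.  If the rows T and columns D
   of a K-robust F form a zero block and |T| <= K, complete T to a K-set chi of
   rows: these span the rows of A, and restricted to the columns D only the
   rows in chi \ T survive, so |D| = rank A_D <= K - |T| as soon as |D| <= M.
   With Z_j the zero set of column j this gives |Z_j| < K, and every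
   (K-M+1)-set of rows lies in fewer than M of the Z_j.  Double counting the
   pairs (j, T) with T a (K-M+1)-subset of Z_j shows that at most
   (M-1) C(P, K-M+1) columns have more than K-M zeros, and each of them still
   has at least P-K+1 nonzero entries, which is M-1 short of P-K+M. *)

Lemma exists_subset_card (T : finType) (D : {set T}) k :
  (k <= #|D|)%N -> exists2 A : {set T}, A \subset D & #|A| = k.
Proof.
move=> le_kD.
have : (0 < #|[set A : {set T} | A \subset D & #|A| == k]|)%N.
  by rewrite cards_draws bin_gt0.
by case/card_gt0P => A; rewrite inE => /andP[sAD /eqP cardA]; exists A.
Qed.

Lemma exists_superset_card (T : finType) (E D : {set T}) k :
  E \subset D -> (#|E| <= k <= #|D|)%N ->
  exists S : {set T}, [/\ E \subset S, S \subset D & #|S| = k].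
Proof.
move=> sED /andP[le_Ek le_kD].
have [|B sBDE cardB] := @exists_subset_card T (D :\: E) (k - #|E|).
  by rewrite cardsDS //; lia.
exists (E :|: B); split; first exact: subsetUl.
  by rewrite subUset sED (subset_trans sBDE) ?subsetDl.
rewrite cardsU cardB (_ : E :&: B = set0) ?cards0; first lia.
by apply/setP => x; rewrite !inE; apply/negbTE/andP => -[xE /(subsetP sBDE)]; rewrite inE xE.
Qed.

Lemma exchange_sum_card (I J : finType) (r : I -> J -> bool) :
  (\sum_i #|[set j | r i j]| = \sum_j #|[set i | r i j]|)%N.
Proof.
under eq_bigr do rewrite -sum1dep_card.
rewrite (exchange_big_dep xpredT) //=.
by apply: eq_bigr => j _; rewrite sum1dep_card.
Qed.

Lemma sum_card_setC_lower_bound (I J : finType) (Z : J -> {set I}) (M K : nat) :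
  (M <= K <= #|I|)%N -> (forall j, #|Z j| < K)%N ->
  (forall T : {set I}, #|T| = (K - M + 1)%N -> #|[set j | T \subset Z j]| < M)%N ->
  (#|J| * (#|I| - K + M) <= \sum_j #|~: Z j| + (M - 1) ^ 2 * 'C(#|I|, K - M + 1))%N.
Proof.
move=> /andP[le_MK le_KI] small_Z few_supersets; set t := (K - M + 1)%N.
have sum_bin : (\sum_j 'C(#|Z j|, t) <= (M - 1) * 'C(#|I|, t))%N.
  (* Both sides count pairs (j, T) with T a t-subset of Z j, the right one by T. *)
  under eq_bigr do rewrite -cards_draws.
  rewrite (exchange_sum_card (fun (j : J) (T : {set I}) => (T \subset Z j) && (#|T| == t))).
  rewrite (bigID (fun T : {set I} => #|T| == t)) /=.
  rewrite [X in (_ + X)%N]big1 ?addn0 => [|T /negPf tT]; last first.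
    by apply/eqP; rewrite cards_eq0; apply/eqP/setP => j; rewrite !inE tT andbF.
  rewrite -card_draws -sum1dep_card big_distrr /=; apply: leq_sum => T /eqP card_T.
  rewrite card_T eqxx muln1; under eq_finset do rewrite andbT.
  by have := few_supersets T card_T; lia.
have column j : (#|I| - K + M <= #|~: Z j| + (M - 1) * 'C(#|Z j|, t))%N.
  have := cardsC (Z j); have := small_Z j.
  case: (leqP t #|Z j|) => [le_tZ | lt_Zt]; last by rewrite bin_small //; lia.
  have pos_bin : (0 < 'C(#|Z j|, t))%N by rewrite bin_gt0.
  by have := leq_pmulr (M - 1) pos_bin; lia.
rewrite -sum_nat_const expnS -mulnA.
apply: leq_trans (leq_add (leqnn _) (leq_mul (leqnn _) sum_bin)).
by rewrite big_distrr -big_split; apply: leq_sum.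
Qed.

Lemma rank_Vandermonde (F : fieldType) m n (a : 'rV[F]_n) :
  (n <= m)%N -> injective (a 0) -> \rank (Vandermonde m a) = n.
Proof.
move=> le_nm inj_a; apply/eqP; rewrite eqn_leq rank_leq_col /=.
apply: leq_trans (mxrankM_maxr (rowsub (widen_ord le_nm) 1%:M) _).
rewrite -rowsubE (_ : rowsub _ _ = Vandermonde n a); last first.
  by apply/matrixP => i j; rewrite !mxE.
rewrite mxrank_unit // unitmxE det_Vandermonde unitfE; apply/prodf_neq0 => i _.
apply/prodf_neq0 => j lt_ij; rewrite subr_eq0; apply: contraTneq lt_ij => /inj_a ->.
by rewrite ltnn.
Qed.

Lemma colsub_Vandermonde (F : pzRingType) m n n' (g : 'I_n' -> 'I_n) (a : 'rV[F]_n) :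
  colsub g (Vandermonde m a) = Vandermonde m (colsub g a).
Proof. by apply/matrixP => i j; rewrite !mxE. Qed.

Section RobustSparsity.
Variable R : realType.

Lemma mxrank_mul_rows_span M P N m (F : 'M[R]_(P, N)) (A : 'M_(M, N)) chi
    (S : 'M_(N, m)) :
  rows_span F chi A -> (\rank (A *m S) <= #|[set i in chi | row i F *m S != 0%R]|)%N.
Proof.
move=> spanA.
have : (A *m S <= \sum_(i in chi) <<row i F *m S>>)%MS.
  apply: submx_trans (submxMr S spanA) _; rewrite sumsmxMr_gen; apply/sumsmxS => i _.
  by rewrite !genmxE (eqmxMr _ (genmxE _)).
move/mxrankS/leq_trans; apply; apply: leq_trans (mxrank_sum_leqif _).1 _ => /=.
rewrite -sum1dep_card big_mkcondr /=; apply: leq_sum => i _.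
by rewrite genmxE rank_rV; case: (_ != 0).
Qed.

Lemma K_robust_zero_block M K P N (F : 'M[R]_(P, N)) (A : 'M_(M, N))
    (T : {set 'I_P}) (D : {set 'I_N}) :
  K_robust K F A -> (#|T| <= K <= P)%N -> {in T & D, forall i j, F i j = 0} ->
  (\rank (colsub (enum_val : 'I_#|D| -> 'I_N) A) <= K - #|T|)%N.
Proof.
move=> robust /andP[le_TK le_KP] FTD0.
have [|chi [sTchi _ card_chi]] := @exists_superset_card _ T setT K (subsetT T).
  by rewrite cardsT card_ord le_TK.
rewrite -[A]mulmx1 -mulmx_colsub.
apply: leq_trans (mxrank_mul_rows_span _ (robust chi card_chi)) _.
rewrite -card_chi -cardsDS //; apply/subset_leq_card/subsetP => i.
rewrite !inE => /andP[chi_i nzi]; rewrite chi_i andbT; apply: contra nzi => Ti.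
by apply/eqP/rowP => k; rewrite mulmx_colsub mulmx1 !mxE FTD0 ?enum_valP.
Qed.

Definition nat_Vandermonde M N : 'M[R]_(M, N) := Vandermonde M (\row_(j < N) (j%:R : R)).

Lemma zero_block_nat_Vandermonde M K P N (F : 'M[R]_(P, N))
    (T : {set 'I_P}) (D : {set 'I_N}) :
  K_robust K F (nat_Vandermonde M N) -> (#|T| <= K <= P)%N -> (#|D| <= M)%N ->
  {in T & D, forall i j, F i j = 0} -> (#|D| <= K - #|T|)%N.
Proof.
move=> robust le_TKP le_DM FTD0; have := K_robust_zero_block robust le_TKP FTD0.
rewrite colsub_Vandermonde rank_Vandermonde // => k l /eqP.
by rewrite !mxE eqr_nat => /eqP/val_inj/enum_val_inj.
Qed.

Lemma sum_row_sparsity_gt M K P N (F : 'M[R]_(P, N)) :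
  (1 < M)%N -> (M <= K <= P)%N -> K_robust K F (nat_Vandermonde M N) ->
  (N * (P - K + M) < \sum_i row_sparsity F i + M ^ 2 * 'C(P, K - M + 1))%N.
Proof.
move=> lt1M /andP[le_MK le_KP] robust.
set Z := fun j : 'I_N => [set i : 'I_P | F i j == 0].
have sum_Z : (\sum_i row_sparsity F i = \sum_j #|~: Z j|)%N.
  rewrite /row_sparsity (exchange_sum_card (fun i j => F i j != 0)).
  by apply: eq_bigr => j _; apply: eq_card => i; rewrite !inE.
have zero_block (T : {set 'I_P}) (D : {set 'I_N}) :
    (#|T| <= K)%N -> (#|D| <= M)%N -> (forall j, j \in D -> T \subset Z j) ->
    (#|D| <= K - #|T|)%N.
  move=> le_TK le_DM sTZ; apply: (zero_block_nat_Vandermonde robust) => //.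
    by rewrite le_TK.
  by move=> i j Ti Dj; have := subsetP (sTZ j Dj) i Ti; rewrite inE => /eqP.
have small_Z j : (#|Z j| < K)%N.
  rewrite ltnNge; apply/negP => le_KZ; have [T sTZ card_T] := exists_subset_card le_KZ.
  have : (#|[set j]| <= K - #|T|)%N.
    by apply: zero_block; rewrite ?cards1 ?card_T //; [lia | move=> j' /set1P ->].
  by rewrite cards1 card_T subnn.
have few_supersets (T : {set 'I_P}) :
    #|T| = (K - M + 1)%N -> (#|[set j | T \subset Z j]| < M)%N.
  move=> card_T; rewrite ltnNge; apply/negP => le_M.
  have [D sD card_D] := exists_subset_card le_M.
  have : (#|D| <= K - #|T|)%N.
    apply: zero_block; rewrite ?card_T ?card_D //; first lia.
    by move=> j /(subsetP sD); rewrite inE.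
  by rewrite card_D card_T; lia.
have := sum_card_setC_lower_bound (Z := Z) (M := M) (K := K).
rewrite !card_ord sum_Z le_MK le_KP => /(_ isT small_Z few_supersets).
have pos_bin : (0 < 'C(P, K - M + 1))%N by rewrite bin_gt0; lia.
have : ((M - 1) ^ 2 * 'C(P, K - M + 1) < M ^ 2 * 'C(P, K - M + 1))%N.
  by rewrite ltn_pmul2r // ltn_exp2r //; lia.
lia.
Qed.

Lemma avg_sparsity_gt M K P N (F : 'M[R]_(P, N)) :
  (1 < M)%N -> (M <= K <= P)%N -> K_robust K F (nat_Vandermonde M N) ->
  N%:R / P%:R * (P - K + M)%:R - (M ^ 2)%:R / P%:R * 'C(P, K - M + 1)%:R < avg_sparsity F.
Proof.
move=> lt1M le_MKP robust; have := sum_row_sparsity_gt lt1M le_MKP robust.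
rewrite -(ltr_nat R) natrD !natrM => lt_sum.
have P_gt0 : 0 < P%:R :> R by rewrite ltr0n; case/andP: le_MKP; lia.
rewrite /avg_sparsity mulrAC [_ / _ * 'C(_, _)%:R]mulrAC -mulrBl ltr_pM2r ?invr_gt0 //.
by rewrite ltrBlDr.
Qed.
End RobustSparsity.

Theorem theorem3 (R : realType) :
  (* main bound *)
  (forall M K P N : nat,
     (1 < M)%N -> (M <= K)%N -> (K <= P)%N -> (0 < N)%N ->
     exists A : 'M[R]_(M, N),
       forall F : 'M[R]_(P, N), K_robust K F A ->
         avg_sparsity F >
           N%:R / P%:R * (P - K + M)%:R - (M ^ 2)%:R / P%:R * 'C(P, K - M + 1)%:R)
  /\
  (* asymptotic form: along any sequence of parameters with M^2 C(P,K-M+1) = o(N),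
     s_bar > N/P (P-K+M) - o(N/P) *)
  (forall Ms Ks Ps Ns : nat -> nat,
     (forall n, [/\ (1 < Ms n)%N, (Ms n <= Ks n)%N, (Ks n <= Ps n)%N & (0 < Ns n)%N]) ->
     tends_to0 (fun n => (Ms n ^ 2 * 'C(Ps n, Ks n - Ms n + 1))%:R / (Ns n)%:R : R) ->
     exists e : nat -> R, tends_to0 e /\
       forall n, exists A : 'M[R]_(Ms n, Ns n),
         forall F : 'M[R]_(Ps n, Ns n), K_robust (Ks n) F A ->
           avg_sparsity F >
             (Ns n)%:R / (Ps n)%:R * (Ps n - Ks n + Ms n)%:R
             - e n * ((Ns n)%:R / (Ps n)%:R)).
Proof.
split=> [M K P N lt1M le_MK le_KP _ | Ms Ks Ps Ns params ratio0].
  by exists (nat_Vandermonde R M N) => F; apply: avg_sparsity_gt; rewrite ?le_MK.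
exists (fun n => (Ms n ^ 2 * 'C(Ps n, Ks n - Ms n + 1))%:R / (Ns n)%:R); split=> // n.
have [lt1M le_MK le_KP N_gt0] := params n.
exists (nat_Vandermonde R (Ms n) (Ns n)) => F robust.
suff -> : (Ms n ^ 2 * 'C(Ps n, Ks n - Ms n + 1))%:R / (Ns n)%:R * ((Ns n)%:R / (Ps n)%:R)
    = (Ms n ^ 2)%:R / (Ps n)%:R * 'C(Ps n, Ks n - Ms n + 1)%:R :> R.
  by apply: avg_sparsity_gt; rewrite ?le_MK.
by rewrite natrM mulrA divfK ?pnatr_eq0 -?lt0n // mulrAC.
Qed.
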